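(* Let $\{X,F\}$ be a compatible pair of skew invertible operators $X,F\in\mathrm{End}(V\otimes V)$, with $F$ invertible. Then $$C_{X,1}\Psi_{F,12}=F_{21}^{-1}C_{X,2},\quad \Psi_{F,12}C_{X,1}=C_{X,2}F_{21}^{-1},\quad \Psi_{F,12}D_{X,2}=D_{X,1}F_{21}^{-1},\quad D_{X,2}\Psi_{F,12}=F_{21}^{-1}D_{X,1}.$$
   Context: $V$ is a complex vector space of dimension $N$ with a fixed basis. For $X\in\mathrm{End}(V\otimes V)$ and $m<r$, $X_{mr}$ denotes the operator on $V^{\otimes n}$ acting as $X$ on tensor factors $m,r$ and as the identity elsewhere, $X_{rm}:=P_{mr}X_{mr}P_{mr}$, $X_m:=X_{m,m+1}$; for $Y\in\mathrm{End}(V)$, $Y_m$ acts as $Y$ on factor $m$. $P$ is the flip $u\otimes v\mapsto v\otimes u$; $\mathrm{Tr}_{(i)}$ is partial trace over factor $i$. $X$ is skew invertible if there is $\Psi_X\in\mathrm{End}(V\otimes V)$ with $\mathrm{Tr}_{(2)}X_{12}\Psi_{X,23}=\mathrm{Tr}_{(2)}\Psi_{X,12}X_{23}=P_{13}$; then $C_X:=\mathrm{Tr}_{(1)}\Psi_{X,12}$, $D_X:=\mathrm{Tr}_{(2)}\Psi_{X,12}$. A pair $\{X,F\}$ is compatible if $X_1F_2F_1=F_2F_1X_2$ and $X_2F_1F_2=F_1F_2X_1$. *)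

(* Operators on tensor powers of V = R^N (fixed basis e_0..e_{N-1})
   are represented by their matrix entries with respect to the product basis:
     Y : op1  :  Y a b            = <e_a | Y | e_b>
     X : op2  :  X a1 a2 b1 b2    = <e_a1 (x) e_a2 | X | e_b1 (x) e_b2>
     Z : op3  :  Z a1 a2 a3 b1 b2 b3  likewise on V^{(x)3}.  *)
From HB Require Import structures.
From mathcomp Require Import all_boot all_order all_algebra.
Set Implicit Arguments. Unset Strict Implicit. Unset Printing Implicit Defensive.
Import GRing.Theory.
Local Open Scope ring_scope.

Section Tensor.
Variables (R : fieldType) (N : nat).
Local Notation I := 'I_N.

Definition op1 := I -> I -> R.
Definition op2 := I -> I -> I -> I -> R.
Definition op3 := I -> I -> I -> I -> I -> I -> R.

Definition dlt (i j : I) : R := (i == j)%:R.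

Definition eqop2 (A B : op2) : Prop := forall a1 a2 b1 b2, A a1 a2 b1 b2 = B a1 a2 b1 b2.
Definition eqop3 (A B : op3) : Prop :=
  forall a1 a2 a3 b1 b2 b3, A a1 a2 a3 b1 b2 b3 = B a1 a2 a3 b1 b2 b3.

Definition mul2 (A B : op2) : op2 := fun a1 a2 c1 c2 =>
  \sum_(b1 < N) \sum_(b2 < N) A a1 a2 b1 b2 * B b1 b2 c1 c2.
Definition mul3 (A B : op3) : op3 := fun a1 a2 a3 c1 c2 c3 =>
  \sum_(b1 < N) \sum_(b2 < N) \sum_(b3 < N)
     A a1 a2 a3 b1 b2 b3 * B b1 b2 b3 c1 c2 c3.

Definition id2 : op2 := fun a1 a2 b1 b2 => dlt a1 b1 * dlt a2 b2.
Definition flip2 : op2 := fun a1 a2 b1 b2 => dlt a1 b2 * dlt a2 b1.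

Definition op21 (X : op2) : op2 := mul2 (mul2 flip2 X) flip2.

Definition lift1 (Y : op1) : op2 := fun a1 a2 b1 b2 => Y a1 b1 * dlt a2 b2.
Definition lift2 (Y : op1) : op2 := fun a1 a2 b1 b2 => dlt a1 b1 * Y a2 b2.

Definition lift12 (X : op2) : op3 := fun a1 a2 a3 b1 b2 b3 =>
  X a1 a2 b1 b2 * dlt a3 b3.
Definition lift23 (X : op2) : op3 := fun a1 a2 a3 b1 b2 b3 =>
  dlt a1 b1 * X a2 a3 b2 b3.

(* partial trace over the 2nd factor of V^{(x)3}: an operator on factors 1,3 *)
Definition ptr2_3 (Z : op3) : op2 := fun a1 a3 b1 b3 =>
  \sum_(b < N) Z a1 b a3 b1 b b3.
Definition ptr1 (X : op2) : op1 := fun a b => \sum_(c < N) X c a c b.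
Definition ptr2 (X : op2) : op1 := fun a b => \sum_(c < N) X a c b c.

(* Psi is a skew inverse of X (P_13, as an operator on factors 1,3, is the flip) *)
Definition skew_inverse (X Psi : op2) : Prop :=
  eqop2 (ptr2_3 (mul3 (lift12 X) (lift23 Psi))) flip2 /\
  eqop2 (ptr2_3 (mul3 (lift12 Psi) (lift23 X))) flip2.

Definition C_of (Psi : op2) : op1 := ptr1 Psi.
Definition D_of (Psi : op2) : op1 := ptr2 Psi.

Definition compatible (X F : op2) : Prop :=
  eqop3 (mul3 (mul3 (lift12 X) (lift23 F)) (lift12 F))
        (mul3 (mul3 (lift23 F) (lift12 F)) (lift23 X)) /\
  eqop3 (mul3 (mul3 (lift23 X) (lift12 F)) (lift23 F))
        (mul3 (mul3 (lift12 F) (lift23 F)) (lift12 X)).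

Definition inverse2 (F Finv : op2) : Prop :=
  eqop2 (mul2 F Finv) id2 /\ eqop2 (mul2 Finv F) id2.

End Tensor.

(* The skew product [skew_mul A B] = Tr_(2) A_12 B_23 (an operator on the
   factors 1,3) is associative with unit the flip P, so Psi_X is a two-sided
   inverse of X for it, and C_X, D_X appear as (1 o Psi_X) = (C_X)_2 and
   (Psi_X o 1) = (D_X)_1.  Lifted operators Y_1, Y_2 slide through the skew
   product, and A |-> A_21 reverses it.
   Compatibility with an invertible F gives the conjugation relation
   F_12 X_23 F^-1_12 = F^-1_23 X_12 F_23.  Apply Tr_(1) C_1 (.) to it: the right
   side collapses to 1 because Tr_(1) C_1 X_12 = 1, while the left side is the
   skew product of an explicit operator T with X; hence T = 1 o Psi_X, which
   reads F^-1_21 o (C_1 F) = C_1 P.  Skew-multiplying the first claimed identity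
   by F on the right turns it into exactly this, and F can be cancelled since
   Psi_F is its skew inverse.  The D-identities use Tr_(3) (.) D_3 instead, and
   the two remaining identities follow from the same relation for the pair
   (F^-1, F) by the symmetry A |-> A_21. *)

From Pilot Require Import Defs.
From mathcomp Require Import all_boot all_order all_algebra ring.
From Stdlib Require Import FunctionalExtensionality Setoid Morphisms.
Set Implicit Arguments. Unset Strict Implicit. Unset Printing Implicit Defensive.
Import GRing.Theory.
Local Open Scope ring_scope.

(* Lets [setoid_rewrite] rewrite under the binder of a big operator. *)
#[local] Instance bigop_body_proper (R I : Type) :
  Proper (eq ==> eq ==> pointwise_relation I eq ==> eq) (@bigop.body R I).
Proof.
by move=> a _ <- r _ <- F G FG; congr bigop.body; apply: functional_extensionality.
Qed.

Ltac pull_sums := repeat (setoid_rewrite big_distrl || setoid_rewrite big_distrr).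

Section Tensor.
Variables (R : fieldType) (N : nat).
Local Notation I := 'I_N.
Local Notation dl := (dlt R).
Local Notation op1 := (op1 R N).
Local Notation op2 := (op2 R N).
Local Notation op3 := (op3 R N).
Local Notation one := (@id2 R N).
Local Notation flip := (@Defs.flip2 R N).

Lemma dltxx (a : I) : dl a a = 1. Proof. by rewrite /dlt eqxx. Qed.

Lemma dltC (a b : I) : dl a b = dl b a. Proof. by rewrite /dlt eq_sym. Qed.

Lemma sum_dltl (a : I) (f : I -> R) : \sum_i dl a i * f i = f a.
Proof.
rewrite (bigD1 a) //= /dlt eqxx mul1r big1 ?addr0 // => i.
by rewrite eq_sym => /negbTE ->; rewrite mul0r.
Qed.

Lemma sum_dltr (a : I) (f : I -> R) : \sum_i f i * dl i a = f a.
Proof. by under eq_bigr do rewrite mulrC dltC; rewrite sum_dltl. Qed.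

Lemma op2_ext (A B : op2) : eqop2 A B -> A = B.
Proof. by move=> AB; do 4 apply: functional_extensionality => ?; apply: AB. Qed.

Lemma op3_ext (A B : op3) : eqop3 A B -> A = B.
Proof. by move=> AB; do 6 apply: functional_extensionality => ?; apply: AB. Qed.

Lemma exchange_big2 (f : I -> I -> I -> I -> R) :
  \sum_a \sum_b \sum_c \sum_d f a b c d = \sum_c \sum_d \sum_a \sum_b f a b c d.
Proof.
rewrite [LHS]pair_big [RHS]pair_big /=.
under eq_bigr do rewrite pair_big; under [RHS]eq_bigr do rewrite pair_big.
exact: exchange_big.
Qed.

Lemma sum_triple (f : I -> I -> I -> R) :
  \sum_a \sum_b \sum_c f a b c = \sum_(v : I * I * I) f v.1.1 v.1.2 v.2.
Proof. by rewrite pair_big /= pair_big. Qed.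

Lemma exchange_big23 (f : I -> I -> I -> I -> I -> R) :
  \sum_a \sum_b \sum_c \sum_d \sum_e f a b c d e =
  \sum_c \sum_d \sum_e \sum_a \sum_b f a b c d e.
Proof.
rewrite [LHS]pair_big sum_triple /=.
under eq_bigr do rewrite sum_triple; under [RHS]eq_bigr do rewrite pair_big.
exact: exchange_big.
Qed.

(** * Entries of products with lifted operators *)

Lemma mul_lift1l (Y : op1) (A : op2) i k j l :
  mul2 (lift1 Y) A i k j l = \sum_x Y i x * A x k j l.
Proof.
apply: eq_bigr => x _; under eq_bigr do rewrite -mulrA.
by rewrite -big_distrr sum_dltl.
Qed.

Lemma mul_lift1r (A : op2) (Y : op1) i k j l :
  mul2 A (lift1 Y) i k j l = \sum_x A i k x l * Y x j.
Proof.
apply: eq_bigr => x _; under eq_bigr do rewrite mulrA.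
by rewrite sum_dltr.
Qed.

Lemma mul_lift2l (Y : op1) (A : op2) i k j l :
  mul2 (lift2 Y) A i k j l = \sum_x Y k x * A i x j l.
Proof.
rewrite /mul2 exchange_big; apply: eq_bigr => x _.
by under eq_bigr do rewrite -mulrA; rewrite sum_dltl.
Qed.

Lemma mul_lift2r (A : op2) (Y : op1) i k j l :
  mul2 A (lift2 Y) i k j l = \sum_x A i k j x * Y x l.
Proof.
rewrite /mul2 exchange_big; apply: eq_bigr => x _.
by under eq_bigr do rewrite mulrCA mulrC; rewrite sum_dltr mulrC.
Qed.

Lemma mul_flip2l (A : op2) i k j l : mul2 flip A i k j l = A k i j l.
Proof.
rewrite /mul2 /Defs.flip2 exchange_big.
under eq_bigr do under eq_bigr do rewrite -mulrA mulrCA.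
by under eq_bigr do rewrite sum_dltl; rewrite sum_dltl.
Qed.

Lemma mul_flip2r (A : op2) i k j l : mul2 A flip i k j l = A i k l j.
Proof.
rewrite /mul2 /Defs.flip2; under eq_bigr do under eq_bigr do rewrite mulrA.
by under eq_bigr do rewrite sum_dltr; rewrite sum_dltr.
Qed.

Lemma mul2_1r (A : op2) : mul2 A one = A.
Proof.
apply: op2_ext => i k j l; rewrite /mul2 /id2.
under eq_bigr do under eq_bigr do rewrite mulrA.
by under eq_bigr do rewrite sum_dltr; rewrite sum_dltr.
Qed.

Lemma op21E (A : op2) i k j l : op21 A i k j l = A k i l j.
Proof. by rewrite /op21 mul_flip2r mul_flip2l. Qed.

Lemma mul_lift12l (A : op2) (Z : op3) a1 a2 a3 c1 c2 c3 :
  mul3 (lift12 A) Z a1 a2 a3 c1 c2 c3 =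
  \sum_b1 \sum_b2 A a1 a2 b1 b2 * Z b1 b2 a3 c1 c2 c3.
Proof.
apply: eq_bigr => b1 _; apply: eq_bigr => b2 _.
by under eq_bigr do rewrite -mulrA; rewrite -big_distrr sum_dltl.
Qed.

Lemma mul_lift12r (Z : op3) (A : op2) a1 a2 a3 c1 c2 c3 :
  mul3 Z (lift12 A) a1 a2 a3 c1 c2 c3 =
  \sum_b1 \sum_b2 Z a1 a2 a3 b1 b2 c3 * A b1 b2 c1 c2.
Proof.
apply: eq_bigr => b1 _; apply: eq_bigr => b2 _.
by under eq_bigr do rewrite mulrA; rewrite sum_dltr.
Qed.

Lemma mul_lift23l (A : op2) (Z : op3) a1 a2 a3 c1 c2 c3 :
  mul3 (lift23 A) Z a1 a2 a3 c1 c2 c3 =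
  \sum_b2 \sum_b3 A a2 a3 b2 b3 * Z a1 b2 b3 c1 c2 c3.
Proof.
rewrite /mul3; setoid_rewrite <- mulrA; do 2 setoid_rewrite <- big_distrr.
exact: sum_dltl.
Qed.

Lemma mul_lift23r (Z : op3) (A : op2) a1 a2 a3 c1 c2 c3 :
  mul3 Z (lift23 A) a1 a2 a3 c1 c2 c3 =
  \sum_b2 \sum_b3 Z a1 a2 a3 c1 b2 b3 * A b2 b3 c2 c3.
Proof.
rewrite /mul3; setoid_rewrite mulrCA; do 2 setoid_rewrite <- big_distrr.
setoid_rewrite (dltC _ c1); exact: sum_dltl.
Qed.

Lemma mul_lift12_lift23 (A B : op2) a1 a2 a3 c1 c2 c3 :
  mul3 (lift12 A) (lift23 B) a1 a2 a3 c1 c2 c3 =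
  \sum_b A a1 a2 c1 b * B b a3 c2 c3.
Proof.
rewrite mul_lift12l exchange_big; apply: eq_bigr => b _.
by under eq_bigr do rewrite mulrCA mulrC; rewrite sum_dltr.
Qed.

Lemma mul_lift23_lift12 (A B : op2) a1 a2 a3 c1 c2 c3 :
  mul3 (lift23 A) (lift12 B) a1 a2 a3 c1 c2 c3 =
  \sum_b A a2 a3 b c3 * B a1 b c1 c2.
Proof.
rewrite mul_lift23l; apply: eq_bigr => b _.
by under eq_bigr do rewrite mulrA; rewrite sum_dltr.
Qed.

Local Notation id3 := (lift12 one).

Lemma mul3A (A B C : op3) : mul3 (mul3 A B) C = mul3 A (mul3 B C).
Proof.
apply: op3_ext => a1 a2 a3 c1 c2 c3; rewrite /mul3 !sum_triple.
under eq_bigr do rewrite sum_triple big_distrl.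
under [RHS]eq_bigr do rewrite sum_triple big_distrr.
by rewrite exchange_big; do 2 (apply: eq_bigr => ? _); rewrite /= mulrA.
Qed.

Lemma mul3_1l (Z : op3) : mul3 id3 Z = Z.
Proof.
apply: op3_ext => a1 a2 a3 c1 c2 c3; rewrite mul_lift12l /id2.
under eq_bigr do under eq_bigr do rewrite -mulrA.
by under eq_bigr do rewrite -big_distrr sum_dltl; rewrite sum_dltl.
Qed.

Lemma mul3_1r (Z : op3) : mul3 Z id3 = Z.
Proof.
apply: op3_ext => a1 a2 a3 c1 c2 c3; rewrite mul_lift12r /id2.
under eq_bigr do under eq_bigr do rewrite mulrA.
by under eq_bigr do rewrite sum_dltr; rewrite sum_dltr.
Qed.

Lemma lift23_id : lift23 one = id3.
Proof. by apply: op3_ext => a1 a2 a3 b1 b2 b3; rewrite /lift23 /lift12 /id2 mulrA. Qed.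

Lemma lift12M (A B : op2) : mul3 (lift12 A) (lift12 B) = lift12 (mul2 A B).
Proof.
apply: op3_ext => a1 a2 a3 c1 c2 c3; rewrite mul_lift12l /lift12 /mul2 big_distrl.
by do 2 (apply: eq_bigr => ? _; rewrite ?big_distrl); rewrite mulrA.
Qed.

Lemma lift23M (A B : op2) : mul3 (lift23 A) (lift23 B) = lift23 (mul2 A B).
Proof.
apply: op3_ext => a1 a2 a3 c1 c2 c3; rewrite mul_lift23l /lift23 /mul2 big_distrr.
by do 2 (apply: eq_bigr => ? _; rewrite ?big_distrr); rewrite mulrCA.
Qed.

Lemma mul3_conj_l (x1 x2 f1 f2 g1 g2 : op3) :
  mul3 f1 g1 = id3 -> mul3 g2 f2 = id3 ->
  mul3 (mul3 x1 f2) f1 = mul3 (mul3 f2 f1) x2 ->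
  mul3 (mul3 f1 x2) g1 = mul3 (mul3 g2 x1) f2.
Proof.
move=> f1g1 g2f2 braid; rewrite -[RHS]mul3_1r -f1g1.
have -> : mul3 (mul3 (mul3 g2 x1) f2) (mul3 f1 g1) =
          mul3 (mul3 g2 (mul3 (mul3 x1 f2) f1)) g1 by rewrite !mul3A.
rewrite braid.
have -> : mul3 (mul3 g2 (mul3 (mul3 f2 f1) x2)) g1 =
          mul3 (mul3 g2 f2) (mul3 (mul3 f1 x2) g1) by rewrite !mul3A.
by rewrite g2f2 mul3_1l.
Qed.

Lemma mul3_conj_r (x1 x2 f1 f2 g1 g2 : op3) :
  mul3 g1 f1 = id3 -> mul3 f2 g2 = id3 ->
  mul3 (mul3 x2 f1) f2 = mul3 (mul3 f1 f2) x1 ->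
  mul3 (mul3 g1 x2) f1 = mul3 (mul3 f2 x1) g2.
Proof.
move=> g1f1 f2g2 braid; rewrite -[LHS]mul3_1r -f2g2.
have -> : mul3 (mul3 (mul3 g1 x2) f1) (mul3 f2 g2) =
          mul3 (mul3 g1 (mul3 (mul3 x2 f1) f2)) g2 by rewrite !mul3A.
rewrite braid.
have -> : mul3 (mul3 g1 (mul3 (mul3 f1 f2) x1)) g2 =
          mul3 (mul3 g1 f1) (mul3 (mul3 f2 x1) g2) by rewrite !mul3A.
by rewrite g1f1 mul3_1l.
Qed.

Lemma compatible_conj (X F G : op2) :
  mul2 F G = one -> mul2 G F = one -> compatible X F ->
  mul3 (mul3 (lift12 F) (lift23 X)) (lift12 G) =
    mul3 (mul3 (lift23 G) (lift12 X)) (lift23 F) /\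
  mul3 (mul3 (lift12 G) (lift23 X)) (lift12 F) =
    mul3 (mul3 (lift23 F) (lift12 X)) (lift23 G).
Proof.
move=> FG GF [/op3_ext braid1 /op3_ext braid2].
by split; [apply: mul3_conj_l braid1 | apply: mul3_conj_r braid2];
  rewrite ?lift12M ?lift23M ?FG ?GF ?lift23_id.
Qed.

(** * The skew product *)

Definition skew_mul (A B : op2) : op2 := ptr2_3 (mul3 (lift12 A) (lift23 B)).

Lemma skew_mulE (A B : op2) i k j l :
  skew_mul A B i k j l = \sum_b \sum_c A i b j c * B c k b l.
Proof. by apply: eq_bigr => b _; rewrite mul_lift12_lift23. Qed.

Lemma skew_mulA (A B C : op2) : skew_mul (skew_mul A B) C = skew_mul A (skew_mul B C).
Proof.
apply: op2_ext => i k j l; rewrite !skew_mulE.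
under eq_bigr do under eq_bigr do rewrite skew_mulE.
under [RHS]eq_bigr do under eq_bigr do rewrite skew_mulE.
pull_sums; rewrite exchange_big2.
by do 4 (apply: eq_bigr => ? _); rewrite /= mulrA.
Qed.

Lemma skew_mul_flipl (A : op2) : skew_mul flip A = A.
Proof.
apply: op2_ext => i k j l; rewrite skew_mulE /Defs.flip2.
under eq_bigr do under eq_bigr do rewrite mulrAC -mulrA.
by under eq_bigr do rewrite sum_dltl; rewrite sum_dltr.
Qed.

Lemma skew_mul_flipr (A : op2) : skew_mul A flip = A.
Proof.
apply: op2_ext => i k j l; rewrite skew_mulE /Defs.flip2.
under eq_bigr do under eq_bigr do rewrite mulrA mulrAC.
by under eq_bigr do rewrite sum_dltr mulrC; rewrite sum_dltl.
Qed.

Lemma skew_mul_id2l (A : op2) : skew_mul one A = lift2 (ptr1 A).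
Proof.
apply: op2_ext => i k j l; rewrite skew_mulE /id2.
under eq_bigr do under eq_bigr do rewrite -mulrA.
by under eq_bigr do rewrite -big_distrr sum_dltl; rewrite -big_distrr.
Qed.

Lemma skew_mul_id2r (A : op2) : skew_mul A one = lift1 (ptr2 A).
Proof.
apply: op2_ext => i k j l; rewrite skew_mulE /id2.
under eq_bigr do under eq_bigr do rewrite mulrA.
by under eq_bigr do rewrite -big_distrl sum_dltr; rewrite -big_distrl.
Qed.

Lemma skew_mul_solve_r (X Psi A B : op2) :
  skew_mul X Psi = flip -> skew_mul A X = B -> A = skew_mul B Psi.
Proof. by move=> XPsi <-; rewrite skew_mulA XPsi skew_mul_flipr. Qed.

Lemma skew_mul_solve_l (X Psi A B : op2) :
  skew_mul Psi X = flip -> skew_mul X A = B -> A = skew_mul Psi B.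
Proof. by move=> PsiX <-; rewrite -skew_mulA PsiX skew_mul_flipl. Qed.

Lemma skew_mul_inj_r (F Psi A B : op2) :
  skew_mul F Psi = flip -> skew_mul A F = skew_mul B F -> A = B.
Proof.
by move=> FPsi AB; rewrite (skew_mul_solve_r FPsi AB) -(skew_mul_solve_r FPsi (erefl _)).
Qed.

Lemma skew_mul_inj_l (F Psi A B : op2) :
  skew_mul Psi F = flip -> skew_mul F A = skew_mul F B -> A = B.
Proof.
by move=> PsiF AB; rewrite (skew_mul_solve_l PsiF AB) -(skew_mul_solve_l PsiF (erefl _)).
Qed.

Lemma skew_mul_lift1l (Y : op1) (A B : op2) :
  skew_mul (mul2 (lift1 Y) A) B = mul2 (lift1 Y) (skew_mul A B).
Proof.
apply: op2_ext => i k j l; rewrite skew_mulE mul_lift1l.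
under eq_bigr do under eq_bigr do rewrite mul_lift1l.
under [RHS]eq_bigr do rewrite skew_mulE.
pull_sums; under eq_bigr do rewrite exchange_big; rewrite exchange_big.
by do 3 (apply: eq_bigr => ? _); rewrite /= mulrA.
Qed.

Lemma skew_mul_lift1r (A : op2) (Y : op1) B :
  skew_mul (mul2 A (lift1 Y)) B = mul2 (skew_mul A B) (lift1 Y).
Proof.
apply: op2_ext => i k j l; rewrite skew_mulE mul_lift1r.
under eq_bigr do under eq_bigr do rewrite mul_lift1r.
under [RHS]eq_bigr do rewrite skew_mulE.
pull_sums; under eq_bigr do rewrite exchange_big; rewrite exchange_big.
by do 3 (apply: eq_bigr => ? _); rewrite /= mulrAC.
Qed.

Lemma skew_mul_lift2_lift1 (A : op2) (Y : op1) B :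
  skew_mul (mul2 A (lift2 Y)) B = skew_mul A (mul2 (lift1 Y) B).
Proof.
apply: op2_ext => i k j l; rewrite !skew_mulE.
under eq_bigr do under eq_bigr do rewrite mul_lift2r.
under [RHS]eq_bigr do under eq_bigr do rewrite mul_lift1l.
pull_sums; under eq_bigr do rewrite exchange_big.
by do 3 (apply: eq_bigr => ? _); rewrite /= mulrA.
Qed.

Lemma skew_mul_lift2r (A B : op2) (Y : op1) :
  skew_mul A (mul2 B (lift2 Y)) = mul2 (skew_mul A B) (lift2 Y).
Proof.
apply: op2_ext => i k j l; rewrite skew_mulE mul_lift2r.
under eq_bigr do under eq_bigr do rewrite mul_lift2r.
under [RHS]eq_bigr do rewrite skew_mulE.
pull_sums; under eq_bigr do rewrite exchange_big; rewrite exchange_big.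
by do 3 (apply: eq_bigr => ? _); rewrite /= mulrA.
Qed.

Lemma skew_mul_lift2l (A : op2) (Y : op1) B :
  skew_mul A (mul2 (lift2 Y) B) = mul2 (lift2 Y) (skew_mul A B).
Proof.
apply: op2_ext => i k j l; rewrite skew_mulE mul_lift2l.
under eq_bigr do under eq_bigr do rewrite mul_lift2l.
under [RHS]eq_bigr do rewrite skew_mulE.
pull_sums; under eq_bigr do rewrite exchange_big; rewrite exchange_big.
by do 3 (apply: eq_bigr => ? _); rewrite /= mulrCA.
Qed.

Lemma op21K (A : op2) : op21 (op21 A) = A.
Proof. by apply: op2_ext => i k j l; rewrite !op21E. Qed.

Lemma op21_skew_mul (A B : op2) : op21 (skew_mul A B) = skew_mul (op21 B) (op21 A).
Proof.
apply: op2_ext => i k j l; rewrite op21E !skew_mulE exchange_big.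
by do 2 (apply: eq_bigr => ? _); rewrite !op21E mulrC.
Qed.

Lemma op21_mul2 (A B : op2) : op21 (mul2 A B) = mul2 (op21 A) (op21 B).
Proof.
apply: op2_ext => i k j l; rewrite op21E /mul2 exchange_big.
by do 2 (apply: eq_bigr => ? _); rewrite !op21E.
Qed.

Lemma op21_lift1 (Y : op1) : op21 (lift1 Y) = lift2 Y.
Proof. by apply: op2_ext => i k j l; rewrite op21E /lift1 /lift2 mulrC. Qed.

Lemma op21_lift2 (Y : op1) : op21 (lift2 Y) = lift1 Y.
Proof. by rewrite -op21_lift1 op21K. Qed.

Lemma op21_flip : op21 flip = flip.
Proof. by apply: op2_ext => i k j l; rewrite op21E /Defs.flip2 mulrC. Qed.

Lemma flip_lift1 (Y : op1) : mul2 flip (lift1 Y) = mul2 (lift2 Y) flip.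
Proof.
by apply: op2_ext => i k j l; rewrite mul_flip2l mul_flip2r /lift1 /lift2 mulrC.
Qed.

(** * Partial traces of the conjugation relation *)

Definition wptr1 (Y : op1) (Z : op3) : op2 := fun a2 a3 b2 b3 =>
  \sum_t \sum_x Y t x * Z x a2 a3 t b2 b3.

Definition wptr3 (Z : op3) (Y : op1) : op2 := fun a1 a2 b1 b2 =>
  \sum_x \sum_t Z a1 a2 x b1 b2 t * Y t x.

Lemma wptr1_lift23l (Y : op1) (A : op2) (Z : op3) :
  wptr1 Y (mul3 (lift23 A) Z) = mul2 A (wptr1 Y Z).
Proof.
apply: op2_ext => a2 a3 b2 b3; rewrite /wptr1 /mul2.
under eq_bigr do under eq_bigr do rewrite mul_lift23l.
by pull_sums; rewrite exchange_big2; do 4 (apply: eq_bigr => ? _); rewrite /= mulrCA.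
Qed.

Lemma wptr1_lift23r (Y : op1) (Z : op3) (A : op2) :
  wptr1 Y (mul3 Z (lift23 A)) = mul2 (wptr1 Y Z) A.
Proof.
apply: op2_ext => a2 a3 b2 b3; rewrite /wptr1 /mul2.
under eq_bigr do under eq_bigr do rewrite mul_lift23r.
by pull_sums; rewrite exchange_big2; do 4 (apply: eq_bigr => ? _); rewrite /= mulrA.
Qed.

Lemma wptr1_lift12 (Y : op1) (A : op2) :
  skew_mul (lift2 Y) A = one -> wptr1 Y (lift12 A) = one.
Proof.
move=> YA; apply: op2_ext => a2 a3 b2 b3.
have := congr1 (fun M => M a3 a2 a3 b2) YA; rewrite skew_mulE /id2 dltxx mul1r.
under eq_bigr do under eq_bigr do rewrite /lift2 dltxx mul1r.
move=> <-; rewrite /wptr1 /lift12 big_distrl; apply: eq_bigr => ? _.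
by rewrite big_distrl; apply: eq_bigr => ? _; rewrite mulrA.
Qed.

Lemma wptr3_lift12l (A : op2) (Z : op3) (Y : op1) :
  wptr3 (mul3 (lift12 A) Z) Y = mul2 A (wptr3 Z Y).
Proof.
apply: op2_ext => a1 a2 b1 b2; rewrite /wptr3 /mul2.
under eq_bigr do under eq_bigr do rewrite mul_lift12l.
by pull_sums; rewrite exchange_big2; do 4 (apply: eq_bigr => ? _); rewrite /= mulrA.
Qed.

Lemma wptr3_lift12r (Z : op3) (A : op2) (Y : op1) :
  wptr3 (mul3 Z (lift12 A)) Y = mul2 (wptr3 Z Y) A.
Proof.
apply: op2_ext => a1 a2 b1 b2; rewrite /wptr3 /mul2.
under eq_bigr do under eq_bigr do rewrite mul_lift12r.
by pull_sums; rewrite exchange_big2; do 4 (apply: eq_bigr => ? _); rewrite /= mulrAC.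
Qed.

Lemma wptr3_lift23 (A : op2) (Y : op1) :
  skew_mul A (lift1 Y) = one -> wptr3 (lift23 A) Y = one.
Proof.
move=> AY; apply: op2_ext => a1 a2 b1 b2.
have := congr1 (fun M => M a2 a1 b2 a1) AY; rewrite skew_mulE /id2 dltxx mulr1.
under eq_bigr do under eq_bigr do rewrite /lift1 dltxx mulr1.
move=> <-; rewrite /wptr3 /lift23 mulrC big_distrl; apply: eq_bigr => ? _.
by rewrite big_distrl; apply: eq_bigr => ? _; rewrite /= -mulrA mulrC.
Qed.

Lemma wptr1_conjE (Y : op1) (F X G : op2) :
  wptr1 Y (mul3 (mul3 (lift12 F) (lift23 X)) (lift12 G)) =
  skew_mul (mul2 flip (skew_mul (op21 G) (mul2 (lift1 Y) F))) X.
Proof.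
apply: op2_ext => a2 a3 b2 b3; rewrite /wptr1 skew_mulE.
under eq_bigr do under eq_bigr do (rewrite mul_lift12r;
  under eq_bigr do under eq_bigr do rewrite mul_lift12_lift23).
under [RHS]eq_bigr do under eq_bigr do (rewrite mul_flip2l skew_mulE;
  under eq_bigr do under eq_bigr do rewrite op21E mul_lift1l).
pull_sums; rewrite exchange_big23 exchange_big; under eq_bigr do rewrite exchange_big.
by do 5 (apply: eq_bigr => ? _); rewrite /=; ring.
Qed.

Lemma wptr3_conjE (G X F : op2) (Y : op1) :
  wptr3 (mul3 (mul3 (lift23 G) (lift12 X)) (lift23 F)) Y =
  skew_mul X (mul2 (skew_mul (mul2 F (lift2 Y)) (op21 G)) flip).
Proof.
apply: op2_ext => a1 a2 b1 b2; rewrite /wptr3 skew_mulE.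
under eq_bigr do under eq_bigr do (rewrite mul_lift23r;
  under eq_bigr do under eq_bigr do rewrite mul_lift23_lift12).
under [RHS]eq_bigr do under eq_bigr do (rewrite mul_flip2r skew_mulE;
  under eq_bigr do under eq_bigr do rewrite op21E mul_lift2r).
pull_sums; rewrite exchange_big23 [RHS]exchange_big.
under [RHS]eq_bigr do rewrite exchange_big.
by do 5 (apply: eq_bigr => ? _); rewrite /=; ring.
Qed.

Section Compatible.
Variables (X PsiX : op2).
Hypotheses (X_PsiX : skew_mul X PsiX = flip) (PsiX_X : skew_mul PsiX X = flip).
Local Notation C := (C_of PsiX).
Local Notation D := (D_of PsiX).

Lemma skew_mul_lift2C : skew_mul (lift2 C) X = one.
Proof. by rewrite -skew_mul_id2l skew_mulA PsiX_X skew_mul_flipr. Qed.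

Lemma skew_mul_lift1D : skew_mul X (lift1 D) = one.
Proof. by rewrite -skew_mul_id2r -skew_mulA X_PsiX skew_mul_flipl. Qed.

Variables (F G : op2).
Hypothesis conj_FG :
  mul3 (mul3 (lift12 F) (lift23 X)) (lift12 G) =
  mul3 (mul3 (lift23 G) (lift12 X)) (lift23 F).

Lemma skew_mul_op21_lift1C : mul2 G F = one ->
  skew_mul (op21 G) (mul2 (lift1 C) F) = mul2 (lift1 C) flip.
Proof.
move=> GF; set T := skew_mul _ _.
have flipT_X : skew_mul (mul2 flip T) X = one.
  rewrite -wptr1_conjE conj_FG wptr1_lift23r wptr1_lift23l.
  by rewrite wptr1_lift12 ?skew_mul_lift2C // mul2_1r.
have := skew_mul_solve_r X_PsiX flipT_X; rewrite skew_mul_id2l => flipT.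
apply: op2_ext => i k j l; have := congr1 (fun M => M k i j l) flipT.
by rewrite mul_flip2l mul_flip2r /lift1 /lift2 => ->; rewrite mulrC.
Qed.

Lemma skew_mul_lift2D_op21 : mul2 F G = one ->
  skew_mul (mul2 F (lift2 D)) (op21 G) = mul2 flip (lift2 D).
Proof.
move=> FG; set T := skew_mul _ _.
have X_Tflip : skew_mul X (mul2 T flip) = one.
  rewrite -wptr3_conjE -conj_FG wptr3_lift12r wptr3_lift12l.
  by rewrite wptr3_lift23 ?skew_mul_lift1D // mul2_1r.
have := skew_mul_solve_l PsiX_X X_Tflip; rewrite skew_mul_id2r => Tflip.
apply: op2_ext => i k j l; have := congr1 (fun M => M i k l j) Tflip.
by rewrite mul_flip2r mul_flip2l /lift1 /lift2 => ->; rewrite mulrC.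
Qed.

Lemma skew_mul_lift2C_op21 : mul2 G F = one ->
  skew_mul (mul2 (lift2 C) (op21 F)) G = mul2 (lift2 C) flip.
Proof.
move=> GF; have := congr1 (@op21 R N) (skew_mul_op21_lift1C GF).
by rewrite op21_skew_mul op21K !op21_mul2 op21_lift1 op21_flip.
Qed.

Lemma skew_mul_op21_lift1D : mul2 F G = one ->
  skew_mul G (mul2 (op21 F) (lift1 D)) = mul2 flip (lift1 D).
Proof.
move=> FG; have := congr1 (@op21 R N) (skew_mul_lift2D_op21 FG).
by rewrite op21_skew_mul op21K !op21_mul2 op21_lift2 op21_flip.
Qed.

End Compatible.

Section SkewInverseF.
Variables (X PsiX F PsiF Finv : op2).
Hypotheses (X_PsiX : skew_mul X PsiX = flip) (PsiX_X : skew_mul PsiX X = flip).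
Hypotheses (F_PsiF : skew_mul F PsiF = flip) (PsiF_F : skew_mul PsiF F = flip).
Hypotheses (F_Finv : mul2 F Finv = one) (Finv_F : mul2 Finv F = one).
Hypothesis conj_F :
  mul3 (mul3 (lift12 F) (lift23 X)) (lift12 Finv) =
  mul3 (mul3 (lift23 Finv) (lift12 X)) (lift23 F).
Hypothesis conj_Finv :
  mul3 (mul3 (lift12 Finv) (lift23 X)) (lift12 F) =
  mul3 (mul3 (lift23 F) (lift12 X)) (lift23 Finv).
Local Notation C := (C_of PsiX).
Local Notation D := (D_of PsiX).

Lemma lift1C_PsiF : mul2 (lift1 C) PsiF = mul2 (op21 Finv) (lift2 C).
Proof.
apply: (skew_mul_inj_r F_PsiF).
rewrite skew_mul_lift1l PsiF_F skew_mul_lift2_lift1.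
exact/esym/(skew_mul_op21_lift1C X_PsiX PsiX_X conj_F Finv_F).
Qed.

Lemma PsiF_lift1C : mul2 PsiF (lift1 C) = mul2 (lift2 C) (op21 Finv).
Proof.
apply: (skew_mul_inj_r F_PsiF).
rewrite skew_mul_lift1r PsiF_F flip_lift1.
exact/esym/(skew_mul_lift2C_op21 X_PsiX PsiX_X conj_Finv F_Finv).
Qed.

Lemma PsiF_lift2D : mul2 PsiF (lift2 D) = mul2 (lift1 D) (op21 Finv).
Proof.
apply: (skew_mul_inj_l PsiF_F).
rewrite skew_mul_lift2r F_PsiF -skew_mul_lift2_lift1.
exact/esym/(skew_mul_lift2D_op21 X_PsiX PsiX_X conj_F F_Finv).
Qed.

Lemma lift2D_PsiF : mul2 (lift2 D) PsiF = mul2 (op21 Finv) (lift1 D).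
Proof.
apply: (skew_mul_inj_l PsiF_F).
rewrite skew_mul_lift2l F_PsiF -flip_lift1.
exact/esym/(skew_mul_op21_lift1D X_PsiX PsiX_X conj_Finv Finv_F).
Qed.

End SkewInverseF.

End Tensor.

Theorem lemma3p3 (R : fieldType) (N : nat) (X F PsiX PsiF Finv : op2 R N) :
  skew_inverse X PsiX -> skew_inverse F PsiF -> compatible X F ->
  inverse2 F Finv ->
  let CX := C_of PsiX in
  let DX := D_of PsiX in
  let Finv21 := op21 Finv in
  [/\ eqop2 (mul2 (lift1 CX) PsiF) (mul2 Finv21 (lift2 CX)),
      eqop2 (mul2 PsiF (lift1 CX)) (mul2 (lift2 CX) Finv21),
      eqop2 (mul2 PsiF (lift2 DX)) (mul2 (lift1 DX) Finv21) &
      eqop2 (mul2 (lift2 DX) PsiF) (mul2 Finv21 (lift1 DX))].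
Proof.
move=> [/op2_ext X_PsiX /op2_ext PsiX_X] [/op2_ext F_PsiF /op2_ext PsiF_F].
move=> compat [/op2_ext F_Finv /op2_ext Finv_F] CX DX Finv21.
have [conj_F conj_Finv] := compatible_conj F_Finv Finv_F compat.
split=> a1 a2 b1 b2.
- by rewrite (lift1C_PsiF X_PsiX PsiX_X F_PsiF PsiF_F Finv_F conj_F).
- by rewrite (PsiF_lift1C X_PsiX PsiX_X F_PsiF PsiF_F F_Finv conj_Finv).
- by rewrite (PsiF_lift2D X_PsiX PsiX_X F_PsiF PsiF_F F_Finv conj_F).
- by rewrite (lift2D_PsiF X_PsiX PsiX_X F_PsiF PsiF_F Finv_F conj_Finv).
Qed.
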